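(* Let $\Lambda=kQ/I$ and $\Gamma=\Lambda/J$ be representation-infinite string algebras, where $J$ is an ideal of $\Lambda$ with $\mathrm{rad}^m(\Lambda)\subseteq J\subseteq\mathrm{rad}^2(\Lambda)$ for some $m\geq2$. Suppose every indecomposable $\Lambda$-module $M$ with $JM\neq0$ is a string module. Then $\Gamma$ is of polynomial growth (resp. domestic) if and only if $\Lambda$ is of polynomial growth (resp. domestic).
   Context: $k$ algebraically closed; algebras finite-dimensional. A string algebra is $kQ/I$ with $I$ admissible and generated by paths, such that each vertex has at most two incoming and at most two outgoing arrows, and for each arrow $\alpha$ there is at most one arrow $\beta$ with $\beta\alpha\notin I$ and at most one arrow $\gamma$ with $\alpha\gamma\notin I$. Every indecomposable module over a string algebra is either a string module $M(C)$ (indexed by a string) or a band module $M(B,n,\varphi)$ (indexed by a band and an indecomposable $k[x,x^{-1}]$-module). For each $d$, $\mu(d)$ is the least number of bimodules over the algebra and $k[x]$, free of finite rank over $k[x]$, such that all but finitely many isoclasses of $d$-dimensional indecomposables are of the form $Q_j\otimes_{k[x]}k[x]/(x-\lambda)$; polynomial growth: $\mu(d)\le d^{m'}$ for a fixed $m'$ and all $d\ge2$; domestic: $\mu$ bounded. *)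

From HB Require Import structures.
From mathcomp Require Import all_boot all_order all_algebra.
From mathcomp Require Import falgebra.
Set Implicit Arguments. Unset Strict Implicit. Unset Printing Implicit Defensive.
Import Order.TTheory GRing.Theory.
Local Open Scope ring_scope.

(* Bound quivers.  A finite quiver has vertices 'I_n and arrows 'I_na with   *)
(* source/target maps.  A (nontrivial) path is a nonempty sequence of arrows *)
(* listed in the ORDER OF TRAVERSAL [:: a1; a2; ...; ak] with                *)
(* src a_{i+1} = tgt a_i; in the algebra it is the product ak * ... * a1.    *)
(* So the paper's "beta alpha" (alpha first) is the sequence [:: alpha; beta]*)
(* A monomial ideal I (generated by paths) is encoded by the predicate inI   *)
(* of the (nontrivial) paths lying in I; such a set is closed under          *)
(* extension, and conversely I is the span of these paths.                  *)

Section Quiver.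
Variables (n na : nat) (src tgt : 'I_na -> 'I_n).

Definition is_path (p : seq 'I_na) : bool :=
  (p != [::]) && sorted (fun x y => src y == tgt x) p.

Definition string_bq (inI : seq 'I_na -> bool) : Prop :=
  [/\ (* I is contained in rad^2: no arrow lies in I *)
      (forall x, ~~ inI [:: x]),
      (* admissible: all paths of length >= N lie in I *)
      (exists N, forall p, is_path p -> (N <= size p)%N -> inI p),
      (* I is an ideal generated by paths: closed under extension of paths *)
      (forall p q, is_path p -> is_path q -> infix p q -> inI p -> inI q),
      (forall v, #|[pred x | tgt x == v]| <= 2)%N /\
      (forall v, #|[pred x | src x == v]| <= 2)%N &
      (* for alpha: at most one beta with beta alpha notin I and at most one
         gamma with alpha gamma notin I *)
      (forall x, #|[pred y | (src y == tgt x) && ~~ inI [:: x; y]]| <= 1)%N /\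
      (forall x, #|[pred y | (tgt y == src x) && ~~ inI [:: y; x]]| <= 1)%N].

End Quiver.

(* Presentations.  [presents J src tgt inI e a] says that the elements       *)
(* e v (vertices) and a x (arrows) of the algebra A induce an isomorphism    *)
(* kQ/I ~= A/J : relations of kQ hold modulo J, paths of I vanish modulo J,  *)
(* and the images of the trivial paths and of the paths not in I form a      *)
(* basis of A/J.  With J = 0 this says A ~= kQ/I via e, a.                   *)

Definition pathprod (k : fieldType) (A : falgType k) (na : nat)
  (a : 'I_na -> A) (p : seq 'I_na) : A :=
  foldl (fun acc x => a x * acc) 1 p.

Definition presents (k : fieldType) (A : falgType k) (J : {vspace A})
  (n na : nat) (src tgt : 'I_na -> 'I_n) (inI : seq 'I_na -> bool)
  (e : 'I_n -> A) (a : 'I_na -> A) : Prop :=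
  [/\ (forall v w, e v * e w - (if v == w then e v else 0) \in J),
      (\sum_(v < n) e v) - 1 \in J,
      (forall x, a x - e (tgt x) * a x * e (src x) \in J),
      (forall p, is_path src tgt p -> inI p -> pathprod a p \in J) &
      (exists ps : seq (seq 'I_na),
         [/\ uniq ps,
             (forall p, p \in ps <-> (is_path src tgt p /\ ~~ inI p)) &
             let X := [seq e v | v <- enum 'I_n] ++ map (pathprod a) ps in
             [/\ free X, (<<X>> :&: J = 0)%VS & (<<X>> + J = fullv)%VS]])].

Definition is_ideal (k : fieldType) (A : falgType k) (J : {vspace A}) : Prop :=
  forall x y, y \in J -> (x * y \in J) /\ (y * x \in J).

(* Finite-dimensional (left) modules over A annihilated by J, i.e. modules   *)
(* over A/J (J = 0 gives all A-modules).  A d-dimensional module is k^d      *)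
(* (column vectors) with a unital k-algebra morphism A -> 'M_d.              *)

Record amod (k : fieldType) (A : falgType k) (J : {vspace A}) (d : nat) := AMod {
  rho : A -> 'M[k]_d;
  rho_lin : forall c x y, rho (c *: x + y) = c *: rho x + rho y;
  rho1 : rho 1 = 1%:M;
  rhoM : forall x y, rho (x * y) = rho x *m rho y;
  rhoJ : forall x, x \in J -> rho x = 0 }.

(* A-k[x]-bimodules (annihilated by J) that are free of rank r over k[x]:   *)
(* A acts k[x]-linearly on k[x]^r, i.e. by r x r matrices over k[x].        *)
Record abimod (k : fieldType) (A : falgType k) (J : {vspace A}) (r : nat) := ABimod {
  brho : A -> 'M[{poly k}]_r;
  brho_lin : forall c x y, brho (c *: x + y) = c%:P *: brho x + brho y;
  brho1 : brho 1 = 1%:M;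
  brhoM : forall x y, brho (x * y) = brho x *m brho y;
  brhoJ : forall x, x \in J -> brho x = 0 }.

(* Q (x)_{k[x]} k[x]/(x - lam) : evaluate the matrices at lam *)
Definition spec (k : fieldType) (A : falgType k) (J : {vspace A}) (r : nat)
  (B : abimod J r) (lam : k) : A -> 'M[k]_r :=
  fun x => map_mx (fun p => p.[lam]) (brho B x).

Definition mxiso (k : fieldType) (A : falgType k) (d1 d2 : nat)
  (f : A -> 'M[k]_d1) (g : A -> 'M[k]_d2) : Prop :=
  exists (P : 'M[k]_(d1, d2)) (Q : 'M[k]_(d2, d1)),
    [/\ P *m Q = 1%:M, Q *m P = 1%:M & forall x, f x *m P = P *m g x].

Definition indec (k : fieldType) (A : falgType k) (J : {vspace A}) (d : nat)
  (M : amod J d) : Prop :=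
  (0 < d)%N /\
  forall f : 'M[k]_d, (forall x, f *m rho M x = rho M x *m f) ->
    f *m f = f -> f = 0 \/ f = 1%:M.

Definition rep_infinite (k : fieldType) (A : falgType k) (J : {vspace A}) : Prop :=
  ~ exists (l : nat) (dims : 'I_l -> nat) (L : forall i, amod J (dims i)),
      forall d (M : amod J d), indec M -> exists i, mxiso (rho M) (rho (L i)).

(* mu(d) <= N : there are at most N bimodules Q_j such that all but finitely *)
(* many isoclasses of d-dimensional indecomposables are Q_j (x) k[x]/(x-lam) *)
Definition mu_le (k : fieldType) (A : falgType k) (J : {vspace A}) (d N : nat) : Prop :=
  exists (N' : nat) (rk : 'I_N' -> nat) (B : forall j, abimod J (rk j))
         (l : nat) (L : 'I_l -> amod J d),
    (N' <= N)%N /\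
    forall M : amod J d, indec M ->
      (exists i, mxiso (rho M) (rho (L i))) \/
      (exists j lam, mxiso (rho M) (spec (B j) lam)).

Definition poly_growth (k : fieldType) (A : falgType k) (J : {vspace A}) : Prop :=
  exists m' : nat, forall d : nat, (2 <= d)%N -> mu_le J d (d ^ m').

Definition domestic (k : fieldType) (A : falgType k) (J : {vspace A}) : Prop :=
  exists b : nat, forall d : nat, mu_le J d b.

(* A string is (v0, l) with l = [:: c_1; ...; c_r], each letter (x, true)    *)
(* direct (= arrow x) or (x, false) inverse (= x^{-1}).  M(C) has basis      *)
(* z_0, ..., z_r; c_i = x direct means x z_i = z_{i-1} (x : v_i -> v_{i-1}), *)
(* c_i = x^{-1} means x z_{i-1} = z_i (x : v_{i-1} -> v_i); z_0 lies at v0.  *)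

Section Strings.
Variables (n na : nat) (src tgt : 'I_na -> 'I_n) (inI : seq 'I_na -> bool).

Fixpoint walk_ok (v : 'I_n) (l : seq ('I_na * bool)) : bool :=
  match l with
  | [::] => true
  | (x, b) :: l' => if b then (tgt x == v) && walk_ok (src x) l'
                    else (src x == v) && walk_ok (tgt x) l'
  end.

Fixpoint vtxs (v : 'I_n) (l : seq ('I_na * bool)) : seq 'I_n :=
  v :: match l with
       | [::] => [::]
       | (x, b) :: l' => vtxs (if b then src x else tgt x) l'
       end.

Fixpoint noback (l : seq ('I_na * bool)) : bool :=
  match l with
  | x :: ((y :: _) as l') => ~~ ((x.1 == y.1) && (x.2 != y.2)) && noback l'
  | _ => true
  end.

Definition is_string (v0 : 'I_n) (l : seq ('I_na * bool)) : Prop :=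
  [/\ walk_ok v0 l, noback l &
      forall i j, (i < j)%N -> (j <= size l)%N ->
        let s := take (j - i) (drop i l) in
        (all snd s -> ~~ inI (rev (map fst s))) /\
        (all (fun c => ~~ c.2) s -> ~~ inI (map fst s))].

(* matrices of M(C) in the basis z_0..z_r (d = r + 1) *)
Definition str_e (k : fieldType) (d : nat) (v0 : 'I_n) (l : seq ('I_na * bool))
  (v : 'I_n) : 'M[k]_d :=
  \matrix_(r < d, c < d) ((r == c) && (nth v0 (vtxs v0 l) r == v))%:R.

Definition str_a (k : fieldType) (d : nat) (l : seq ('I_na * bool))
  (x : 'I_na) : 'M[k]_d :=
  \matrix_(r < d, c < d)
    ([&& (c == r.+1 :> nat) & nth None (map Some l) r == Some (x, true)]
     || [&& (r == c.+1 :> nat) & nth None (map Some l) c == Some (x, false)])%:R.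

Definition is_string_module (k : fieldType) (A : falgType k) (J : {vspace A})
  (e : 'I_n -> A) (a : 'I_na -> A) (d : nat) (M : amod J d) : Prop :=
  exists (v0 : 'I_n) (l : seq ('I_na * bool)) (P : 'M[k]_d),
    [/\ is_string v0 l, (size l).+1 = d, P \in unitmx,
        (forall v, rho M (e v) *m P = P *m str_e k d v0 l v) &
        (forall x, rho M (a x) *m P = P *m str_a k d l x)].

End Strings.

(** The Gamma-modules are the Lambda-modules annihilated by J, so the two
    functions mu bound each other in every dimension d.  A one-parameter
    family Q (x) k[x]/(x - lam) of Lambda-modules either is annihilated by J
    for every lam, and is then a family of Gamma-modules, or only for the
    finitely many roots lam of some nonzero entry of the action of an element
    of J; those members join the finite list of exceptions.  Conversely, an
    indecomposable Lambda-module not annihilated by J is a string module, and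
    there are only finitely many strings of each length. *)

From HB Require Import structures.
From mathcomp Require Import all_boot all_order all_algebra.
From mathcomp Require Import falgebra.
From Stdlib Require Import ClassicalEpsilon Classical.
Set Implicit Arguments. Unset Strict Implicit. Unset Printing Implicit Defensive.
Import GRing.Theory.
Local Open Scope ring_scope.

Section ModuleIsomorphism.
Variables (k : fieldType) (A : falgType k).

Lemma mxiso_sym d1 d2 (f : A -> 'M[k]_d1) (g : A -> 'M[k]_d2) :
  mxiso f g -> mxiso g f.
Proof.
case=> P [Q [PQ QP fPg]]; exists Q, P; split => // x.
have -> : Q *m f x = Q *m f x *m (P *m Q) by rewrite PQ mulmx1.
by rewrite !mulmxA -(mulmxA Q) fPg !mulmxA QP mul1mx.
Qed.

Lemma mxiso_trans d1 d2 d3 (f : A -> 'M[k]_d1) (g : A -> 'M[k]_d2)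
  (h : A -> 'M[k]_d3) : mxiso f g -> mxiso g h -> mxiso f h.
Proof.
case=> P [Q [PQ QP fPg]] [P' [Q' [PQ' QP' gPh]]]; exists (P *m P'), (Q' *m Q).
split.
- by rewrite mulmxA -(mulmxA P) PQ' mulmx1 PQ.
- by rewrite mulmxA -(mulmxA Q') QP mulmx1 QP'.
- by move=> x; rewrite mulmxA fPg -!mulmxA gPh.
Qed.

Lemma mxiso_annihilates d1 d2 (f : A -> 'M[k]_d1) (g : A -> 'M[k]_d2) x :
  mxiso f g -> f x = 0 -> g x = 0.
Proof.
case=> P [Q [_ QP fPg]] fx0.
by rewrite -[g x]mul1mx -QP -mulmxA -fPg fx0 mul0mx mulmx0.
Qed.

(* The representatives are picked by Hilbert's epsilon; the case distinction
   is needed because epsilon requires an inhabited type. *)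
Lemma finite_isoclasses_cover (J : {vspace A}) d (I : finType)
    (C : I -> amod J d -> Prop) :
  (forall t M1 M2, C t M1 -> C t M2 -> mxiso (rho M1) (rho M2)) ->
  exists l (L : 'I_l -> amod J d),
    forall M t, C t M -> exists i, mxiso (rho M) (rho (L i)).
Proof.
move=> isoC.
case: (excluded_middle_informative (inhabited (amod J d))) => [inh|noM];
  last by exists 0%N, (fun i : 'I_0 => False_rect _ (notF (ltn_ord i))) => M; case: noM.
pose L (i : 'I_#|I|) := epsilon inh (C (enum_val i)).
exists #|I|, L => M t CtM; exists (enum_rank t).
apply: (isoC t M _ CtM).
by rewrite /L enum_rankK; exact: (epsilon_spec inh (C t) (ex_intro _ M CtM)).
Qed.

End ModuleIsomorphism.

Section InflationDeflation.
Variables (k : fieldType) (A : falgType k).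

Lemma amod_rho0 (J : {vspace A}) d (M : amod J d) : rho M 0 = 0.
Proof.
have := rho_lin M 1 0 0; rewrite !scale1r !addr0 => rho00.
by apply: (addrI (rho M 0)); rewrite addr0 -rho00.
Qed.

Lemma abimod_brho0 (J : {vspace A}) r (B : abimod J r) : brho B 0 = 0.
Proof.
have := brho_lin B 1 0 0; rewrite !scale1r !addr0 => brho00.
by apply: (addrI (brho B 0)); rewrite addr0 -brho00.
Qed.

Lemma amod_rho_vs0 (J : {vspace A}) d (M : amod J d) x :
  x \in (0%VS : {vspace A}) -> rho M x = 0.
Proof. by rewrite memv0 => /eqP ->; exact: amod_rho0. Qed.

Lemma abimod_brho_vs0 (J : {vspace A}) r (B : abimod J r) x :
  x \in (0%VS : {vspace A}) -> brho B x = 0.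
Proof. by rewrite memv0 => /eqP ->; exact: abimod_brho0. Qed.

Definition inflate_amod (J : {vspace A}) d (M : amod J d) :
    amod (0%VS : {vspace A}) d :=
  @AMod _ _ 0%VS d (rho M) (rho_lin M) (rho1 M) (rhoM M) (@amod_rho_vs0 J d M).

Definition deflate_amod (J : {vspace A}) d (M : amod (0%VS : {vspace A}) d)
    (MJ0 : forall x, x \in J -> rho M x = 0) : amod J d :=
  @AMod _ _ J d (rho M) (rho_lin M) (rho1 M) (rhoM M) MJ0.

Definition inflate_abimod (J : {vspace A}) r (B : abimod J r) :
    abimod (0%VS : {vspace A}) r :=
  @ABimod _ _ 0%VS r (brho B) (brho_lin B) (brho1 B) (brhoM B)
    (@abimod_brho_vs0 J r B).

Definition deflate_abimod (J : {vspace A}) r (B : abimod (0%VS : {vspace A}) r)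
    (BJ0 : forall x, x \in J -> brho B x = 0) : abimod J r :=
  @ABimod _ _ J r (brho B) (brho_lin B) (brho1 B) (brhoM B) BJ0.

Definition zero_abimod (J : {vspace A}) : abimod J 0.
Proof.
apply: (@ABimod _ _ J 0 (fun _ => 0)) => //.
- by move=> *; rewrite scaler0 addr0.
- by rewrite flatmx0.
- by move=> *; rewrite mul0mx.
Defined.

End InflationDeflation.

Section Intertwining.
Variables (k : fieldType) (A : falgType k) (J : {vspace A}).
Variables (d1 d2 : nat) (M1 : amod J d1) (M2 : amod J d2) (P : 'M[k]_(d1, d2)).

Definition intertwines (y : A) := rho M1 y *m P = P *m rho M2 y.

Lemma intertwines0 : intertwines 0.
Proof. by rewrite /intertwines !amod_rho0 mul0mx mulmx0. Qed.

Lemma intertwines1 : intertwines 1.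
Proof. by rewrite /intertwines !rho1 mul1mx mulmx1. Qed.

Lemma intertwinesD x y : intertwines x -> intertwines y -> intertwines (x + y).
Proof.
rewrite /intertwines => Px Py.
have := rho_lin M1 1 x y; have := rho_lin M2 1 x y; rewrite !scale1r => -> ->.
by rewrite mulmxDl mulmxDr Px Py.
Qed.

Lemma intertwinesZ c y : intertwines y -> intertwines (c *: y).
Proof.
rewrite /intertwines => Py.
have := rho_lin M1 c y 0; have := rho_lin M2 c y 0.
rewrite !addr0 !amod_rho0 !addr0 => -> ->.
by rewrite -scalemxAl Py scalemxAr.
Qed.

Lemma intertwinesM x y : intertwines x -> intertwines y -> intertwines (x * y).
Proof. by rewrite /intertwines !rhoM => Px Py; rewrite -mulmxA Py !mulmxA Px. Qed.

Lemma intertwines_pathprod na (a : 'I_na -> A) p :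
  (forall x, intertwines (a x)) -> intertwines (pathprod a p).
Proof.
rewrite /pathprod => Pa; elim: p 1 intertwines1 => [|x p IHp] acc Pacc //=.
by apply: IHp; apply: intertwinesM.
Qed.

Lemma intertwines_span (X : seq A) y :
  (forall z, z \in X -> intertwines z) -> y \in <<X>>%VS -> intertwines y.
Proof.
move=> PX /(@coord_span _ _ _ (in_tuple X)) ->.
apply: (big_ind intertwines intertwines0 intertwinesD) => i _.
by apply/intertwinesZ/PX/mem_nth.
Qed.

Lemma intertwines_presented n na (src tgt : 'I_na -> 'I_n)
    (inI : seq 'I_na -> bool) (e : 'I_n -> A) (a : 'I_na -> A) :
  presents J src tgt inI e a ->
  (forall v, intertwines (e v)) -> (forall x, intertwines (a x)) ->
  forall y, intertwines y.
Proof.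
case=> _ _ _ _ [ps [_ _ [_ _ spanJ]]] Pe Pa y.
move: (memvf y); rewrite -spanJ => /memv_addP[u u_span [w wJ ->]].
apply: intertwinesD; last by rewrite /intertwines !rhoJ // mul0mx mulmx0.
apply: (intertwines_span _ u_span) => z.
by rewrite mem_cat => /orP[/mapP[v _ ->] | /mapP[p _ ->]];
  last exact: intertwines_pathprod.
Qed.

End Intertwining.

Lemma similar_conj_inv (k : fieldType) d (R S P : 'M[k]_d) :
  P \in unitmx -> R *m P = P *m S -> invmx P *m R = S *m invmx P.
Proof.
move=> uP RPS.
by rewrite -[invmx P *m R]mulmx1 -(mulmxV uP) !mulmxA -(mulmxA _ R) RPS mulmxA
  mulVmx // mul1mx.
Qed.

Lemma mxiso_of_similar_generators (k : fieldType) (A : falgType k)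
    (J : {vspace A}) n na (src tgt : 'I_na -> 'I_n) (inI : seq 'I_na -> bool)
    (e : 'I_n -> A) (a : 'I_na -> A) d (M1 M2 : amod J d)
    (E : 'I_n -> 'M[k]_d) (X : 'I_na -> 'M[k]_d) (P1 P2 : 'M[k]_d) :
  presents J src tgt inI e a -> P1 \in unitmx -> P2 \in unitmx ->
  (forall v, rho M1 (e v) *m P1 = P1 *m E v) ->
  (forall x, rho M1 (a x) *m P1 = P1 *m X x) ->
  (forall v, rho M2 (e v) *m P2 = P2 *m E v) ->
  (forall x, rho M2 (a x) *m P2 = P2 *m X x) ->
  mxiso (rho M1) (rho M2).
Proof.
move=> pres uP1 uP2 eP1 aP1 eP2 aP2.
exists (P1 *m invmx P2), (P2 *m invmx P1); split.
- by rewrite mulmxA -(mulmxA P1) mulVmx // mulmx1 mulmxV.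
- by rewrite mulmxA -(mulmxA P2) mulVmx // mulmx1 mulmxV.
- apply: (intertwines_presented pres) => [v|x]; rewrite /intertwines mulmxA.
    by rewrite eP1 -!mulmxA (similar_conj_inv uP2 (eP2 v)).
  by rewrite aP1 -!mulmxA (similar_conj_inv uP2 (aP2 x)).
Qed.

Lemma spec_annihilator_roots (k : closedFieldType) (A : falgType k)
    (J J' : {vspace A}) r (B : abimod J' r) :
  (exists2 x, x \in J & brho B x != 0) ->
  exists rs : seq k, forall lam,
    (forall x, x \in J -> spec B lam x = 0) -> lam \in rs.
Proof.
case=> x xJ /matrix0Pn[i [j Bij_neq0]].
have [rs Bij_split] := closed_field_poly_normal (brho B x i j).
exists rs => lam BJ0.
have : root (brho B x i j) lam.
  by apply/eqP; have /matrixP/(_ i j) := BJ0 x xJ; rewrite /spec !mxE.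
by rewrite Bij_split rootZ ?lead_coef_eq0 // root_prod_XsubC.
Qed.

Lemma mu_le_quotient (k : closedFieldType) (A : falgType k) (J : {vspace A}) d N :
  mu_le (0%VS : {vspace A}) d N -> mu_le J d N.
Proof.
case=> N' [rk [B [l [L [N'_le cover]]]]].
pose killsJ j := forall x, x \in J -> brho (B j) x = 0.
pose BJ j : {r : nat & abimod J r} :=
  match excluded_middle_informative (killsJ j) with
  | left BjJ0 => existT _ (rk j) (deflate_abimod BjJ0)
  | right _ => existT _ 0%N (zero_abimod J)
  end.
have roots j : exists rs : seq k, ~ killsJ j -> forall lam,
    (forall x, x \in J -> spec (B j) lam x = 0) -> lam \in rs.
  have [BjJ0 | notJ0] := classic (killsJ j); first by exists [::].
  have [|rs rsP] := spec_annihilator_roots (J := J) (B := B j); last by exists rs.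
  apply: NNPP => noX; apply: notJ0 => x xJ; apply: NNPP => /eqP Bx_neq0.
  by apply: noX; exists x.
have [rs rsP] := choice _ roots.
pose R := (\max_(j < N') size (rs j))%N.
pose C (t : 'I_l + 'I_N' * 'I_R) (M : amod J d) : Prop :=
  match t with
  | inl i => mxiso (rho M) (rho (L i))
  | inr (j, i) => mxiso (rho M) (spec (B j) (nth 0 (rs j) i))
  end.
have [l' [L' coverC]] : exists l' (L' : 'I_l' -> amod J d),
    forall M t, C t M -> exists i, mxiso (rho M) (rho (L' i)).
  by apply: finite_isoclasses_cover => -[i|[j i]] M1 M2 /= iso1 iso2;
    exact: mxiso_trans iso1 (mxiso_sym iso2).
exists N', (fun j => projT1 (BJ j)), (fun j => projT2 (BJ j)), l', L'.
split => // M indM.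
have [[i ?] | [j [lam isoBj]]] := cover (inflate_amod M) indM.
  by left; apply: (coverC M (inl i)).
have [BjJ0 | notJ0] := classic (killsJ j).
  by right; exists j, lam; rewrite /BJ; case: excluded_middle_informative.
have lam_root : lam \in rs j.
  by apply: rsP => // x xJ; apply: (mxiso_annihilates isoBj); exact: rhoJ M x xJ.
have lam_idx : (index lam (rs j) < R)%N.
  by apply: leq_trans (leq_bigmax j); rewrite index_mem.
by left; apply: (coverC M (inr (j, Ordinal lam_idx))); rewrite /= nth_index.
Qed.

Lemma mu_le_inflate (k : fieldType) (A : falgType k) n na
    (src tgt : 'I_na -> 'I_n) (inI : seq 'I_na -> bool) (e : 'I_n -> A)
    (a : 'I_na -> A) (J : {vspace A}) d N :
  presents 0%VS src tgt inI e a ->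
  (forall d (M : amod (0%VS : {vspace A}) d), indec M ->
     (exists x, x \in J /\ rho M x <> 0) ->
     is_string_module src tgt inI e a M) ->
  mu_le J d N -> mu_le (0%VS : {vspace A}) d N.
Proof.
move=> pres strings [N' [rk [B [l [L [N'_le cover]]]]]].
pose C (t : 'I_l + 'I_n * (d.-1).-tuple ('I_na * bool))
    (M : amod (0%VS : {vspace A}) d) : Prop :=
  match t with
  | inl i => mxiso (rho M) (rho (L i))
  | inr (v0, s) => exists2 P, P \in unitmx &
       (forall v, rho M (e v) *m P = P *m str_e src tgt k d v0 s v) /\
       (forall x, rho M (a x) *m P = P *m str_a k d s x)
  end.
have [l' [L' coverC]] : exists l' (L' : 'I_l' -> amod (0%VS : {vspace A}) d),
    forall M t, C t M -> exists i, mxiso (rho M) (rho (L' i)).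
  apply: finite_isoclasses_cover => -[i|[v0 s]] M1 M2 /=.
    by move=> iso1 iso2; exact: mxiso_trans iso1 (mxiso_sym iso2).
  by move=> [P1 uP1 [eP1 aP1]] [P2 uP2 [eP2 aP2]];
    exact: mxiso_of_similar_generators pres uP1 uP2 eP1 aP1 eP2 aP2.
exists N', rk, (fun j => inflate_abimod (B j)), l', L'.
split => // M indM.
have [MJ_neq0 | MJ0] := classic (exists x, x \in J /\ rho M x <> 0).
  have [v0 [s [P [_ size_s uP eP aP]]]] := strings d M indM MJ_neq0.
  have size_s' : size s == d.-1 by rewrite -size_s.
  by left; apply: (coverC M (inr (v0, Tuple size_s'))); exists P.
have MJ0' x : x \in J -> rho M x = 0.
  by move=> xJ; apply: NNPP => Mx_neq0; apply: MJ0; exists x.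
by case: (cover (deflate_amod MJ0') indM) => [[i ?]|[j [lam ?]]];
  [left; apply: (coverC M (inl i)) | right; exists j, lam].
Qed.

Unset Implicit Arguments.
Theorem mainTheorem20 (k : closedFieldType) (Lam : falgType k)
  (n na : nat) (src tgt : 'I_na -> 'I_n) (inI : seq 'I_na -> bool)
  (e : 'I_n -> Lam) (a : 'I_na -> Lam) (J : {vspace Lam}) (m : nat) :
  (* Lambda = kQ/I is a string algebra, presented by e, a *)
  string_bq src tgt inI ->
  presents 0%VS src tgt inI e a ->
  (* J is an ideal with rad^m <= J <= rad^2, m >= 2 *)
  is_ideal J ->
  (2 <= m)%N ->
  (forall p, is_path src tgt p -> (m <= size p)%N -> pathprod a p \in J) ->
  (exists ps : seq (seq 'I_na),
     (forall p, p \in ps -> is_path src tgt p /\ (2 <= size p)%N) /\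
     (J <= <<map (pathprod a) ps>>)%VS) ->
  (* Gamma = Lambda/J is a string algebra *)
  (exists (n' na' : nat) (src' tgt' : 'I_na' -> 'I_n') (inI' : seq 'I_na' -> bool)
          (e' : 'I_n' -> Lam) (a' : 'I_na' -> Lam),
     string_bq src' tgt' inI' /\ presents J src' tgt' inI' e' a') ->
  (* both are representation-infinite *)
  rep_infinite (0%VS : {vspace Lam}) ->
  rep_infinite J ->
  (* every indecomposable Lambda-module M with JM <> 0 is a string module *)
  (forall d (M : amod (0%VS : {vspace Lam}) d), indec M ->
     (exists x, x \in J /\ rho M x <> 0) ->
     is_string_module src tgt inI e a M) ->
  (poly_growth J <-> poly_growth (0%VS : {vspace Lam})) /\
  (domestic J <-> domestic (0%VS : {vspace Lam})).
Proof.
move=> _ pres _ _ _ _ _ _ _ strings.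
have inflate d N : mu_le J d N -> mu_le (0%VS : {vspace Lam}) d N.
  exact: mu_le_inflate pres strings.
have quotient d N : mu_le (0%VS : {vspace Lam}) d N -> mu_le J d N.
  exact: mu_le_quotient.
split; split.
- by case=> m' mu_le_J; exists m' => d d_ge2; exact: inflate (mu_le_J d d_ge2).
- by case=> m' mu_le_0; exists m' => d d_ge2; exact: quotient (mu_le_0 d d_ge2).
- by case=> b mu_le_J; exists b => d; exact: inflate (mu_le_J d).
- by case=> b mu_le_0; exists b => d; exact: quotient (mu_le_0 d).
Qed.
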